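(* Let $k\ge 2$, let $G$ be a finite simple graph, and let $c:V(G)\to\{1,\dots,k\}$ be a coloring with $|c^{-1}(1)|=|c^{-1}(2)|=\dots=|c^{-1}(k)|$. Then $c$ is a neighborhood-balanced $k$-coloring of $G$ if and only if $c$ is a closed neighborhood balanced $k$-coloring of the complement $\overline{G}$.
   Context: For a vertex $v$, $N(v)=\{u: uv\in E\}$ and $N[v]=N(v)\cup\{v\}$. A neighborhood-balanced $k$-coloring of a graph is a map $c:V\to\{1,\dots,k\}$ such that for every vertex $v$ the numbers $|\{u\in N(v): c(u)=i\}|$, $i=1,\dots,k$, are all equal. A closed neighborhood balanced $k$-coloring is defined in the same way with $N[v]$ in place of $N(v)$. *)

From mathcomp Require Import all_boot.
Set Implicit Arguments. Unset Strict Implicit. Unset Printing Implicit Defensive.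

Definition simple_graph (T : finType) (e : rel T) : Prop :=
  symmetric e /\ irreflexive e.

Definition compl_graph (T : finType) (e : rel T) : rel T :=
  fun x y => (x != y) && ~~ e x y.

Definition nbhd (T : finType) (e : rel T) (v : T) : {set T} := [set u | e v u].
Definition cnbhd (T : finType) (e : rel T) (v : T) : {set T} := v |: nbhd e v.

(* Colours 1..k are represented by 'I_k (i.e. 0..k-1). *)
Definition nb_coloring (T : finType) (k : nat) (e : rel T) (c : T -> 'I_k) : Prop :=
  forall v (i j : 'I_k),
    #|[set u in nbhd e v | c u == i]| = #|[set u in nbhd e v | c u == j]|.

Definition cnb_coloring (T : finType) (k : nat) (e : rel T) (c : T -> 'I_k) : Prop :=
  forall v (i j : 'I_k),
    #|[set u in cnbhd e v | c u == i]| = #|[set u in cnbhd e v | c u == j]|.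

From mathcomp Require Import all_boot.

(* In the complement of a simple graph the closed neighbourhood of v is the
   complement of its open neighbourhood in G, so inside each colour class the
   two counts add up to the (common) size of the class. *)

Lemma cnbhd_compl_graph (T : finType) (e : rel T) (v : T) :
  irreflexive e -> cnbhd (compl_graph e) v = ~: nbhd e v.
Proof.
move=> irr; apply/setP=> u; rewrite !inE /compl_graph.
by case: (eqVneq u v) => [->|_]; rewrite ?irr.
Qed.

Lemma card_setC_sep (T : finType) (A : {set T}) (P : pred T) :
  #|[set u in ~: A | P u]| = #|[set u | P u]| - #|[set u in A | P u]|.
Proof.
have -> : [set u in ~: A | P u] = [set u | P u] :\: A.
  by apply/setP=> u; rewrite !inE andbC.
by rewrite cardsD setIdE setIC.
Qed.

Lemma card_sep_le (T : finType) (A : {set T}) (P : pred T) :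
  #|[set u in A | P u]| <= #|[set u | P u]|.
Proof. by apply/subset_leq_card/subsetP=> u; rewrite !inE => /andP[]. Qed.

Lemma card_color_cnbhd_compl (T : finType) (k : nat) (e : rel T)
    (c : T -> 'I_k) (v : T) (i : 'I_k) :
  irreflexive e ->
  #|[set u in cnbhd (compl_graph e) v | c u == i]| =
  #|[set u | c u == i]| - #|[set u in nbhd e v | c u == i]|.
Proof. by move=> irr; rewrite cnbhd_compl_graph // card_setC_sep. Qed.

Theorem theorem2p16 (k : nat) (T : finType) (e : rel T) (c : T -> 'I_k) :
  2 <= k ->
  simple_graph e ->
  (forall i j : 'I_k, #|[set v | c v == i]| = #|[set v | c v == j]|) ->
  (nb_coloring e c <-> cnb_coloring (compl_graph e) c).
Proof.
move=> _ [_ irr] eq_class; split=> balanced v i j.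
  by rewrite !card_color_cnbhd_compl // (balanced v i j) (eq_class i j).
move: (balanced v i j); rewrite !card_color_cnbhd_compl // (eq_class i j).
move=> /eqP; rewrite eqn_sub2lE; first by move/eqP.
  by rewrite -(eq_class i j) card_sep_le.
exact: card_sep_le.
Qed.
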